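(* Let $\mathcal H$ be a complex Hilbert space and let $\mathbf A=(A_1,\dots,A_m)$ be an $m$-tuple of bounded self-adjoint operators on $\mathcal H$. If $\Lambda_{\hat k}(\mathbf A)\neq\emptyset$ for some integer $\hat k>(m+1)/2$, then $\Lambda_1(\mathbf A)$ is star-shaped and contains $\operatorname{conv}\Lambda_{\hat k}(\mathbf A)$, and every element of $\operatorname{conv}\Lambda_{\hat k}(\mathbf A)$ is a star center of $\Lambda_1(\mathbf A)$.
   Context: For an $m$-tuple $\mathbf A=(A_1,\dots,A_m)$ of bounded self-adjoint operators on a complex Hilbert space $\mathcal H$ and a positive integer $k$, $\Lambda_k(\mathbf A)=\{(a_1,\dots,a_m)\in\mathbb R^m:$ there is an orthogonal projection $P$ of rank $k$ on $\mathcal H$ with $PA_jP=a_jP$ for $j=1,\dots,m\}$; $\Lambda_1(\mathbf A)=\{(\langle A_1x,x\rangle,\dots,\langle A_mx,x\rangle):\|x\|=1\}$ is the joint numerical range. A set $S\subseteq\mathbb R^m$ is star-shaped with star center $\mathbf c\in S$ if for every $\mathbf b\in S$ the segment joining $\mathbf c$ and $\mathbf b$ lies in $S$. $\operatorname{conv}$ denotes convex hull. *)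

From HB Require Import structures.
From mathcomp Require Import all_boot all_order all_algebra.
From mathcomp Require Import complex.
From mathcomp Require Import reals.
Set Implicit Arguments. Unset Strict Implicit. Unset Printing Implicit Defensive.
Import Order.TTheory GRing.Theory Num.Theory.
Local Open Scope ring_scope.

Section Hilbert.
Variables (R : realType) (V : lmodType R[i]) (ip : V -> V -> R[i]).

Definition inner_product : Prop :=
  [/\ forall (a : R[i]) (x y z : V), ip (a *: x + y) z = a * ip x z + ip y z,
      forall x y : V, ip y x = (ip x y)^*,
      forall x : V, 0 <= ip x x &
      forall x : V, ip x x = 0 -> x = 0].

Definition hnorm (x : V) : R := Num.sqrt (complex.Re (ip x x)).

Definition complete_ip : Prop :=
  forall u : nat -> V,
    (forall e : R, 0 < e -> exists N, forall p q, (N <= p)%N -> (N <= q)%N ->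
        hnorm (u p - u q) < e) ->
    exists x : V, forall e : R, 0 < e -> exists N, forall p, (N <= p)%N ->
        hnorm (u p - x) < e.

Definition hilbert_space : Prop := inner_product /\ complete_ip.

Definition is_linear (T : V -> V) : Prop :=
  forall (a : R[i]) (x y : V), T (a *: x + y) = a *: T x + T y.

Definition bounded_op (T : V -> V) : Prop :=
  is_linear T /\ exists M : R, forall x, hnorm (T x) <= M * hnorm x.

Definition self_adjoint (T : V -> V) : Prop :=
  forall x y, ip (T x) y = ip x (T y).

Definition orth_proj_rank (k : nat) (P : V -> V) : Prop :=
  [/\ is_linear P, forall x, P (P x) = P x, self_adjoint P &
      exists e : 'I_k -> V,
        (forall c : 'I_k -> R[i], \sum_(i < k) c i *: e i = 0 -> forall i, c i = 0) /\
        (forall y, (exists x, P x = y) <->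
                   exists c : 'I_k -> R[i], y = \sum_(i < k) c i *: e i)].

Definition Lambda (m : nat) (A : 'I_m -> V -> V) (k : nat) : 'rV[R]_m -> Prop :=
  fun a => exists P : V -> V, orth_proj_rank k P /\
    forall (j : 'I_m) (x : V), P (A j (P x)) = ((a 0 j)%:C)%C *: P x.

End Hilbert.

Definition conv (R : realType) (m : nat) (S : 'rV[R]_m -> Prop) : 'rV[R]_m -> Prop :=
  fun x => exists n (w : 'I_n -> R) (p : 'I_n -> 'rV[R]_m),
    [/\ forall i, 0 <= w i, \sum_(i < n) w i = 1, forall i, S (p i) &
        x = \sum_(i < n) w i *: p i].

Definition star_center (R : realType) (m : nat) (S : 'rV[R]_m -> Prop) (c : 'rV[R]_m) : Prop :=
  S c /\ forall b, S b -> forall t : R, 0 <= t <= 1 -> S ((1 - t) *: c + t *: b).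

Definition star_shaped (R : realType) (m : nat) (S : 'rV[R]_m -> Prop) : Prop :=
  exists c, star_center S c.

(* If a lies in Lambda_k(A) via a projection P of rank k > (m+1)/2 and b is
   attained by a unit vector y, the real-linear conditions Re <x, y> = 0 and
   Re <x, A_j y> = 0 (m + 1 of them) leave a nonzero x in the 2k-real-dimensional
   range of P.  For such a unit x, z = sqrt(1-t) x + sqrt(t) y is a unit vector
   with <A_j z, z> = (1-t) a_j + t b_j, so the whole segment [a, b] lies in
   Lambda_1(A).  Iterating over the points of a convex combination gives the
   same for every point of conv Lambda_k(A). *)
From HB Require Import structures.
From mathcomp Require Import all_boot all_order all_algebra.
From mathcomp Require Import complex.
From mathcomp Require Import reals.
From mathcomp Require Import ring zify.
Set Implicit Arguments. Unset Strict Implicit. Unset Printing Implicit Defensive.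
Import Order.TTheory GRing.Theory Num.Theory.
Local Open Scope ring_scope.

Lemma exists_nonzero_kernel_row (F : fieldType) n p (M : 'M[F]_(n, p)) :
  (p < n)%N -> exists2 u : 'rV[F]_n, u != 0 & u *m M = 0.
Proof.
move=> ltpn; have : kermx M != 0.
  by rewrite kermx_eq0 /row_free ltn_eqF // (leq_ltn_trans (rank_leq_col M)).
by case/rowV0Pn => u /sub_kermxP uM u_neq0; exists u.
Qed.

Lemma Re_realM (R : rcfType) (r : R) (z : R[i]) :
  complex.Re (r%:C * z)%C = r * complex.Re z.
Proof. by case: z => a b /=; ring. Qed.

Section LinearMaps.
Variables (R : realType) (V : lmodType R[i]) (T : V -> V).
Hypothesis linT : is_linear T.

Lemma is_linear0 : T 0 = 0.
Proof.
apply: (@addrI _ (T 0)); rewrite addr0.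
by have := linT 1 0 0; rewrite scaler0 addr0 scale1r.
Qed.

Lemma is_linearD x y : T (x + y) = T x + T y.
Proof. by rewrite -[x]scale1r linT !scale1r. Qed.

Lemma is_linearZ a x : T (a *: x) = a *: T x.
Proof. by rewrite -[a *: x]addr0 linT is_linear0 addr0. Qed.

End LinearMaps.

Section InnerProduct.
Variables (R : realType) (V : lmodType R[i]) (ip : V -> V -> R[i]).
Hypothesis hip : inner_product ip.

Let ipDZl a x y z : ip (a *: x + y) z = a * ip x z + ip y z.
Proof. by case: hip. Qed.

Let ipC x y : ip y x = (ip x y)^*%C.
Proof. by case: hip. Qed.

Let ip_ge0 x : 0 <= ip x x.
Proof. by case: hip. Qed.

Let ip_eq0 x : ip x x = 0 -> x = 0.
Proof. by case: hip => _ _ _; apply. Qed.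

Lemma ip0l z : ip 0 z = 0.
Proof.
apply: (@addrI _ (ip 0 z)); rewrite addr0.
by have := ipDZl 1 0 0 z; rewrite scaler0 addr0 mul1r.
Qed.

Lemma ipDl x y z : ip (x + y) z = ip x z + ip y z.
Proof. by have := ipDZl 1 x y z; rewrite scale1r mul1r. Qed.

Lemma ipZl a x z : ip (a *: x) z = a * ip x z.
Proof. by rewrite -[a *: x]addr0 ipDZl ip0l addr0. Qed.

Lemma ipDr x y z : ip z (x + y) = ip z x + ip z y.
Proof. by rewrite (ipC x z) (ipC y z) [LHS]ipC ipDl raddfD. Qed.

Lemma ipZr a x z : ip z (a *: x) = a^*%C * ip z x.
Proof. by rewrite (ipC x z) [LHS]ipC ipZl rmorphM. Qed.

Lemma ip_suml (I : finType) (c : I -> R[i]) (e : I -> V) w :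
  ip (\sum_i c i *: e i) w = \sum_i c i * ip (e i) w.
Proof.
elim/big_rec2: _ => [|i y1 y2 _ IH]; first exact: ip0l.
by rewrite ipDl ipZl IH.
Qed.

Lemma ip_selfE x : ip x x = ((complex.Re (ip x x))%:C)%C.
Proof.
have /ger0_Im := ip_ge0 x.
by case: (ip x x) => a b /= ->.
Qed.

Lemma ip_self_gt0 x : x != 0 -> 0 < complex.Re (ip x x).
Proof.
move=> x_neq0; have : 0 < ip x x.
  by rewrite lt_def ip_ge0 andbT; apply: contra_neq x_neq0; apply: ip_eq0.
by rewrite ltcE => /andP[].
Qed.

Lemma exists_unit_rescale x :
  x != 0 -> exists r : R, ip ((r%:C)%C *: x) ((r%:C)%C *: x) = 1.
Proof.
move=> /ip_self_gt0 gt0; exists (Num.sqrt (complex.Re (ip x x)))^-1.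
rewrite ipZl ipZr conjc_real mulrA -rmorphM /= [ip x x]ip_selfE -rmorphM /=.
by rewrite -expr2 exprVn sqr_sqrtr ?ltW // mulVf // lt0r_neq0.
Qed.

Lemma ip_comb_Re_orth (T : V -> V) x y (al be : R) :
  is_linear T -> self_adjoint ip T -> complex.Re (ip x (T y)) = 0 ->
  ip (T ((al%:C)%C *: x + (be%:C)%C *: y)) ((al%:C)%C *: x + (be%:C)%C *: y) =
  ((al ^+ 2)%:C)%C * ip (T x) x + ((be ^+ 2)%:C)%C * ip (T y) y.
Proof.
move=> linT saT Re0.
rewrite (is_linearD linT) !(is_linearZ linT) !ipDl !ipZl !ipDr !ipZr !conjc_real.
rewrite (saT x y) (ipC x (T y)).
have : ip x (T y) + (ip x (T y))^*%C = 0 by rewrite addcJ Re0 mulr0.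
move: (ip x (T y)) ((ip x (T y))^*%C) => g h /eqP; rewrite addr_eq0 => /eqP ->.
rewrite !rmorphXn /=; ring.
Qed.

(* Re <x, w> is R-linear in x, so q such conditions cut the 2k-dimensional
   real span of k vectors down to a nonzero subspace when q < 2k. *)
Lemma exists_span_Re_orth k q (e : 'I_k -> V) (w : 'I_q -> V) : (q < k + k)%N ->
  exists2 c : 'I_k -> R[i], (exists i, c i != 0) &
    forall j, complex.Re (ip (\sum_i c i *: e i) (w j)) = 0.
Proof.
move=> ltqk.
pose M : 'M[R]_(k + k, q) := \matrix_(l, j)
  match split l with
  | inl i => complex.Re (ip (e i) (w j))
  | inr i => - complex.Im (ip (e i) (w j))
  end.
have [u /rV0Pn [l ul_neq0] uM] := @exists_nonzero_kernel_row _ _ _ M ltqk.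
have splitl i : split (lshift k i) = inl i := unsplitK (inl i).
have splitr i : split (rshift k i) = inr i := unsplitK (inr i).
exists (fun i => (u 0 (lshift k i)) +i* (u 0 (rshift k i)))%C.
  rewrite -(splitK l) in ul_neq0; case: (split l) ul_neq0 => i ui_neq0; exists i.
    by apply: contra_neq ui_neq0 => /(congr1 (@complex.Re R)).
  by apply: contra_neq ui_neq0 => /(congr1 (@complex.Im R)).
move=> j; have := congr1 (fun v : 'rV[R]_q => v 0 j) uM.
rewrite !mxE big_split_ord ip_suml raddf_sum /= => uMj.
rewrite -[RHS]uMj -big_split /=; apply: eq_bigr => i _.
by rewrite !mxE splitl splitr; case: (ip (e i) (w j)) => a b /=; ring.
Qed.

Lemma ip_compression (P T : V -> V) (l : R[i]) x :
  self_adjoint ip P -> (forall v, P (T (P v)) = l *: P v) -> P x = x ->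
  ip (T x) x = l * ip x x.
Proof. by move=> saP PTP Px; rewrite -{2}Px -saP -{1}Px PTP Px ipZl. Qed.

Variables (m : nat) (A : 'I_m -> V -> V).
Hypothesis hA : forall j, bounded_op ip (A j) /\ self_adjoint ip (A j).

Let linA j : is_linear (A j).
Proof. by case: (hA j) => [[]]. Qed.

Let saA j : self_adjoint ip (A j).
Proof. by case: (hA j). Qed.

(* Points of the joint numerical range, i.e. of Lambda_1 (see [Lambda_jnr] and
   [jnr_Lambda1]), described by the unit vectors attaining them. *)
Definition jnr (a : 'rV[R]_m) : Prop :=
  exists z, ip z z = 1 /\ forall j, ip (A j z) z = ((a 0 j)%:C)%C.

Lemma Lambda_jnr k a : (0 < k)%N -> Lambda ip A k a -> jnr a.
Proof.
move=> k_gt0 [P [[linP PP saP [e [e_free rangeP]]] PAP]].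
pose i0 := Ordinal k_gt0.
pose c : 'I_k -> R[i] := fun i => (i == i0)%:R.
have sum_c : \sum_i c i *: e i = e i0.
  rewrite (bigD1 i0) //= big1 ?addr0 /c ?eqxx ?scale1r // => i /negbTE ->.
  by rewrite scale0r.
have Pe : P (e i0) = e i0.
  have [x <-] : exists x, P x = e i0 by apply/rangeP; exists c; rewrite sum_c.
  exact: PP.
have e_neq0 : e i0 != 0.
  apply/eqP => e0; have /eqP := e_free c ltac:(by rewrite sum_c e0) i0.
  by rewrite /c eqxx oner_eq0.
have [r unit_r] := exists_unit_rescale e_neq0.
exists ((r%:C)%C *: e i0); split => // j.
rewrite (ip_compression saP (PAP j)) ?unit_r ?mulr1 //.
by rewrite is_linearZ // Pe.
Qed.

Lemma jnr_Lambda1 a : jnr a -> Lambda ip A 1 a.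
Proof.
move=> [z [z1 Az]]; exists (fun v => ip v z *: z); split; last first.
  by move=> j x; rewrite is_linearZ // ipZl Az !scalerA mulrC.
split.
- by move=> a0 x y; rewrite ipDZl scalerDl scalerA.
- by move=> x; rewrite ipZl z1 mulr1.
- by move=> x y; rewrite ipZl ipZr (ipC y z) mulrC.
exists (fun _ => z); split.
  move=> c; rewrite big_ord1 => /(congr1 (ip^~ z)) + i.
  by rewrite ipZl z1 mulr1 ip0l (ord1 i).
move=> y; split.
  by move=> [x <-]; exists (fun _ => ip x z); rewrite big_ord1.
by move=> [c ->]; exists (c ord0 *: z); rewrite big_ord1 ipZl z1 mulr1.
Qed.

Lemma Lambda_segment_jnr k a b t : (m + 1 < 2 * k)%N ->
  Lambda ip A k a -> jnr b -> 0 <= t <= 1 -> jnr ((1 - t) *: a + t *: b).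
Proof.
move=> ltmk [P [[linP PP saP [e [e_free rangeP]]] PAP]] [y [y1 Ay]] /andP[t_ge0 t_le1].
pose w : 'I_m.+1 -> V := fun j => if unlift ord_max j is Some j' then A j' y else y.
have [c [i ci_neq0] cw] := @exists_span_Re_orth k m.+1 e w ltac:(lia).
set x := \sum_i c i *: e i in cw.
have Px : P x = x.
  by have [x0 <-] : exists x0, P x0 = x by apply/rangeP; exists c.
have x_neq0 : x != 0 by apply: contra_neq ci_neq0 => /e_free ->.
have [r unit_r] := exists_unit_rescale x_neq0.
set x' := (r%:C)%C *: x in unit_r.
have Px' : P x' = x' by rewrite is_linearZ // Px.
have Re_x' v : complex.Re (ip x v) = 0 -> complex.Re (ip x' v) = 0.
  by rewrite ipZl Re_realM => ->; rewrite mulr0.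
have Re_x'y : complex.Re (ip x' y) = 0.
  by apply: Re_x'; have := cw ord_max; rewrite /w unlift_none.
have Re_x'Ay j : complex.Re (ip x' (A j y)) = 0.
  by apply: Re_x'; have := cw (lift ord_max j); rewrite /w liftK.
have t1_ge0 : 0 <= 1 - t by rewrite subr_ge0.
exists (((Num.sqrt (1 - t))%:C)%C *: x' + ((Num.sqrt t)%:C)%C *: y); split.
  rewrite (@ip_comb_Re_orth id) // unit_r y1 !mulr1 !sqr_sqrtr //.
  by rewrite -rmorphD /= subrK.
move=> j; rewrite ip_comb_Re_orth // (ip_compression saP (PAP j)) //.
by rewrite unit_r mulr1 Ay !mxE !sqr_sqrtr // -!rmorphM -rmorphD.
Qed.

Lemma conv_segment_jnr k n (w : 'I_n -> R) (p : 'I_n -> 'rV[R]_m) b t :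
  (m + 1 < 2 * k)%N -> (forall i, 0 <= w i) -> (forall i, Lambda ip A k (p i)) ->
  jnr b -> 0 <= t -> \sum_i w i + t = 1 -> jnr (\sum_i w i *: p i + t *: b).
Proof.
move=> ltmk; elim: n w p b t => [|n IH] w p b t w_ge0 Lp jb t_ge0.
  by rewrite !big_ord0 !add0r => ->; rewrite scale1r.
rewrite !big_ord_recr /= -!addrA.
set s := w ord_max; have s_ge0 : 0 <= s by apply: w_ge0.
have IHw := IH (fun i => w (widen_ord (leqnSn n) i)) (fun i => p (widen_ord (leqnSn n) i))
  _ _ (fun i => w_ge0 _) (fun i => Lp _).
have [st0 | st_gt0] := eqVneq (s + t) 0.
  have /andP[/eqP s0 /eqP t0] : (s == 0) && (t == 0) by rewrite -paddr_eq0 // st0.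
  rewrite s0 t0 !scale0r !addr0 => sum1.
  by have := IHw b 0 jb (lexx 0); rewrite scale0r !addr0; apply.
have {}st_gt0 : 0 < s + t by rewrite lt_def st_gt0 addr_ge0.
have t'_bounds : 0 <= t / (s + t) <= 1.
  by rewrite (divr_ge0 t_ge0 (ltW st_gt0)) ler_pdivrMr // mul1r lerDr.
have := IHw _ (s + t) (Lambda_segment_jnr ltmk (Lp ord_max) jb t'_bounds) (ltW st_gt0).
suff -> : (s + t) *: ((1 - t / (s + t)) *: p ord_max + t / (s + t) *: b) =
          s *: p ord_max + t *: b by [].
rewrite scalerDr !scalerA mulrBr mulr1 mulrCA divff ?mulr1 ?addrK //.
exact: lt0r_neq0.
Qed.

End InnerProduct.

Theorem theorem3p6 (R : realType) (V : lmodType R[i]) (ip : V -> V -> R[i])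
  (hH : hilbert_space ip) (m : nat) (A : 'I_m -> V -> V)
  (hA : forall j, bounded_op ip (A j) /\ self_adjoint ip (A j))
  (khat : nat) (hk : (m + 1 < 2 * khat)%N)
  (hne : exists a, Lambda ip A khat a) :
  [/\ star_shaped (Lambda ip A 1),
      (forall a, conv (Lambda ip A khat) a -> Lambda ip A 1 a) &
      forall c, conv (Lambda ip A khat) c -> star_center (Lambda ip A 1) c].
Proof.
have [hip _] := hH.
have khat_gt0 : (0 < khat)%N by lia.
have [a0 La0] := hne.
have center c : conv (Lambda ip A khat) c -> star_center (Lambda ip A 1) c.
  move=> [n [w [p [w_ge0 sum_w Lp ->]]]]; split.
    apply: jnr_Lambda1 => //.
    have := conv_segment_jnr hip hA hk w_ge0 Lp (Lambda_jnr hip khat_gt0 La0) (lexx 0).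
    by rewrite scale0r !addr0 sum_w; apply.
  move=> b Lb t /andP[t_ge0 t_le1]; apply: jnr_Lambda1 => //.
  have w'_ge0 i : 0 <= (1 - t) * w i by rewrite mulr_ge0 ?subr_ge0.
  have := conv_segment_jnr hip hA hk w'_ge0 Lp (Lambda_jnr hip (ltn0Sn 0) Lb) t_ge0.
  rewrite -mulr_sumr sum_w mulr1 subrK scaler_sumr => /(_ erefl).
  by under [in X in X -> _]eq_bigr do rewrite -scalerA.
split; last exact: center; last by move=> a /center [].
exists a0; apply: center; exists 1%N, (fun _ => 1), (fun _ => a0).
by split; rewrite ?big_ord1 ?scale1r.
Qed.
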